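(* Let $f:\mathbb{R}^d\to\mathbb{R}$ be $\mu$-strongly convex, $L$-smooth (i.e. $\mu I\preceq\nabla^2 f(x)\preceq LI$ for all $x$) and $M$-strongly self-concordant. Let $1\le k<d$, let $x,x_+\in\mathbb{R}^d$, and let $B$ be a symmetric matrix with $B\succeq\nabla^2 f(x)$. Let $r:=\|x_+-x\|_{\nabla^2 f(x)}$, $P:=\big(1+\frac{Mr}{2}\big)^2B$ and $$B_+:=\mathrm{SR}\text{-}k\big(P,\nabla^2 f(x_+),E_k(P-\nabla^2 f(x_+))\big).$$ Then $B_+\succeq\nabla^2 f(x_+)$ and $$\frac{\mathrm{tr}(B_+-\nabla^2 f(x_+))}{\mathrm{tr}(\nabla^2 f(x_+))}\le\Big(1-\frac kd\Big)\Big(1+\frac{Mr}{2}\Big)^4\Big(\frac{\mathrm{tr}(B-\nabla^2 f(x))}{\mathrm{tr}(\nabla^2 f(x))}+2Mr\Big).$$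
   Context: $f$ is $M$-strongly self-concordant if $\nabla^2 f(y)-\nabla^2 f(x)\preceq M\|y-x\|_{\nabla^2 f(z)}\nabla^2 f(w)$ for all $x,y,z,w\in\mathbb{R}^d$, where $\|u\|_A=\sqrt{u^\top A u}$. For a symmetric matrix $C\in\mathbb{R}^{d\times d}$ and $1\le k<d$, $E_k(C)=[e_{i_1},\dots,e_{i_k}]\in\mathbb{R}^{d\times k}$, where $e_j$ is the $j$-th standard basis vector and $i_1,\dots,i_k$ are the indices of the $k$ largest diagonal entries of $C$. For symmetric positive definite $G\succeq A$ and full-rank $U\in\mathbb{R}^{d\times k}$: $\mathrm{SR}\text{-}k(G,A,U)=G$ if $GU=AU$, and otherwise $\mathrm{SR}\text{-}k(G,A,U)=G-(G-A)U\big(U^\top(G-A)U\big)^{\dagger}U^\top(G-A)$, where $\dagger$ is the Moore–Penrose pseudoinverse. *)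

From HB Require Import structures.
From mathcomp Require Import all_boot all_order all_algebra.
From mathcomp Require Import all_classical all_reals all_analysis.
Set Implicit Arguments. Unset Strict Implicit. Unset Printing Implicit Defensive.
Import Order.TTheory GRing.Theory Num.Theory.
Import numFieldNormedType.Exports.
Local Open Scope ring_scope.

Section Defs.
Variable R : realType.

Definition qform n (A : 'M[R]_n) (u : 'rV[R]_n) : R := (u *m A *m u^T) 0 0.

Definition anorm n (A : 'M[R]_n) (u : 'rV[R]_n) : R := Num.sqrt (qform A u).

Definition psd n (A : 'M[R]_n) : Prop := A^T = A /\ forall u, 0 <= qform A u.

Definition loewner_le n (A B : 'M[R]_n) : Prop := psd (B - A).

Definition hessian_of n (f : 'rV[R]_n -> R) (H : 'rV[R]_n -> 'M[R]_n) : Prop :=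
  forall x, differentiable f x /\
    forall u, differentiable ('D_u f) x /\
      forall v, 'D_v ('D_u f) x = (u *m H x *m v^T) 0 0.

Definition strongly_self_concordant n (H : 'rV[R]_n -> 'M[R]_n) (M : R) : Prop :=
  forall x y z w, loewner_le (H y - H x) ((M * anorm (H z) (y - x)) *: H w).

(* Moore-Penrose pseudoinverse: the (unique) X with the four Penrose conditions *)
Definition penrose m n (A : 'M[R]_(m, n)) (X : 'M[R]_(n, m)) : Prop :=
  [/\ A *m X *m A = A, X *m A *m X = X, (A *m X)^T = A *m X & (X *m A)^T = X *m A].

Definition mp_pinv m n (A : 'M[R]_(m, n)) : 'M[R]_(n, m) :=
  xget 0 [set X | penrose A X].

Definition SRk n k (G A : 'M[R]_n) (U : 'M[R]_(n, k)) : 'M[R]_n :=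
  if G *m U == A *m U then G
  else G - (G - A) *m U *m mp_pinv (U^T *m (G - A) *m U) *m U^T *m (G - A).

Definition sel_mx n k (s : 'I_k -> 'I_n) : 'M[R]_(n, k) :=
  \matrix_(i < n, j < k) (i == s j)%:R.

(* s selects indices of k largest diagonal entries of C (any tie-breaking) *)
Definition selects_topk n k (C : 'M[R]_n) (s : 'I_k -> 'I_n) : Prop :=
  injective s /\ forall j i, (forall j', s j' != i) -> C i i <= C (s j) (s j).

End Defs.

(* After the SR-k update the gap [B_+ - H(x_+)] is the generalized Schur
   complement of [C := P - H(x_+)] with respect to the selected coordinates, so
   it is psd and has lost at least the selected diagonal entries of [C]; picking
   the [k] largest ones removes at least a fraction [k/d] of [tr C].
   Strong self-concordance with [t := M r] gives [H(x_+) <= (1+t) H(x)] and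
   [H(x) <= (1+t) H(x_+)]; since [1 + t <= (1 + t/2)^2], the scaled matrix [P]
   dominates [H(x_+)], and the traces of [P - H(x_+)] and [B - H(x)] compare up
   to the factor [(1 + t/2)^4] and the additive term [2t], because
   [(1 + t/2)^4 (1 - 2t) <= 1]. *)
From HB Require Import structures.
From mathcomp Require Import all_boot all_order all_algebra.
From mathcomp Require Import all_classical all_reals all_analysis.
From mathcomp Require Import ring lra zify.
Import Order.TTheory GRing.Theory Num.Theory.
Import numFieldNormedType.Exports.
Set Implicit Arguments. Unset Strict Implicit. Unset Printing Implicit Defensive.
Local Open Scope ring_scope.

Section Psd.
Variable R : realType.
Implicit Types (n : nat) (a b : R).

Lemma qformD n (A B : 'M[R]_n) u : qform (A + B) u = qform A u + qform B u.
Proof. by rewrite /qform mulmxDr mulmxDl mxE. Qed.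

Lemma qformB n (A B : 'M[R]_n) u : qform (A - B) u = qform A u - qform B u.
Proof. by rewrite qformD /qform mulmxN mulNmx [in X in _ + X]mxE. Qed.

Lemma qformZ n a (A : 'M[R]_n) u : qform (a *: A) u = a * qform A u.
Proof. by rewrite /qform -scalemxAr -scalemxAl mxE. Qed.

Lemma qformN n (A : 'M[R]_n) u : qform A (- u) = qform A u.
Proof. by rewrite /qform mulNmx raddfN /= mulmxN mulNmx opprK. Qed.

Lemma anormN n (A : 'M[R]_n) u : anorm A (- u) = anorm A u.
Proof. by rewrite /anorm qformN. Qed.

Lemma qform_delta n (A : 'M[R]_n) i : qform A (delta_mx 0 i) = A i i.
Proof. by rewrite /qform -rowE trmx_delta -colE !mxE. Qed.

Lemma mxtrace_qform n (A : 'M[R]_n) : \tr A = \sum_i qform A (delta_mx 0 i).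
Proof. by apply: eq_bigr => i _; rewrite qform_delta. Qed.

Lemma psd_tr n (A : 'M[R]_n) : psd A -> 0 <= \tr A.
Proof. by case=> _ qA; rewrite mxtrace_qform; apply: sumr_ge0. Qed.

Lemma psdD n (A B : 'M[R]_n) : psd A -> psd B -> psd (A + B).
Proof.
case=> sA qA [sB qB]; split; first by rewrite linearD /= sA sB.
by move=> u; rewrite qformD addr_ge0.
Qed.

Lemma psdZ n a (A : 'M[R]_n) : 0 <= a -> psd A -> psd (a *: A).
Proof.
move=> a0 [sA qA]; split; first by rewrite linearZ /= sA.
by move=> u; rewrite qformZ mulr_ge0.
Qed.

Lemma psd_scalar n a : 0 <= a -> psd (a%:M : 'M[R]_n).
Proof.
move=> a0; rewrite -scalemx1; apply: psdZ => //; split; first exact: trmx1.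
move=> u; rewrite /qform mulmx1 mxE; apply: sumr_ge0 => i _.
by rewrite mxE -expr2 sqr_ge0.
Qed.

Lemma loewner_le_trans n (A B C : 'M[R]_n) :
  loewner_le A B -> loewner_le B C -> loewner_le A C.
Proof. by move=> hAB hBC; rewrite /loewner_le -(subrKA B); exact: psdD. Qed.

Lemma loewner_leZ n a (A B : 'M[R]_n) :
  0 <= a -> loewner_le A B -> loewner_le (a *: A) (a *: B).
Proof. by move=> a0 hAB; rewrite /loewner_le -scalerBr; exact: psdZ. Qed.

Lemma loewner_le_scale n a b (A : 'M[R]_n) :
  psd A -> a <= b -> loewner_le (a *: A) (b *: A).
Proof. by move=> pA ab; rewrite /loewner_le -scalerBl; apply: psdZ; rewrite ?subr_ge0. Qed.

Lemma loewner_le_tr n (A B : 'M[R]_n) : loewner_le A B -> \tr A <= \tr B.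
Proof. by move/psd_tr; rewrite raddfB /= subr_ge0. Qed.

Lemma psd_tr_gt0_of_scalar_le n (mu : R) (A : 'M[R]_n) :
  (0 < n)%N -> 0 < mu -> loewner_le mu%:M A -> psd A /\ 0 < \tr A.
Proof.
move=> n0 mu0 hA; split.
  by rewrite -(subrK mu%:M A); apply: psdD => //; apply/psd_scalar/ltW.
have := loewner_le_tr hA; rewrite mxtrace_scalar; apply: lt_le_trans.
by rewrite pmulrn_lgt0.
Qed.

End Psd.

Section MoorePenrose.
Variable R : realType.

Lemma penrose_unique m n (A : 'M[R]_(m, n)) X Y : penrose A X -> penrose A Y -> X = Y.
Proof.
case=> [AXA XAX AXs XAs] [AYA YAY AYs YAs].
have XAY_X : X *m A *m Y = X.
  have -> : X *m A *m Y = X *m ((A *m X)^T *m (A *m Y)^T) by rewrite AXs AYs !mulmxA XAX.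
  by rewrite -trmx_mul mulmxA AYA AXs mulmxA XAX.
have XAY_Y : X *m A *m Y = Y.
  have -> : X *m A *m Y = (X *m A)^T *m (Y *m A)^T *m Y.
    by rewrite XAs YAs -(mulmxA (X *m A)) YAY.
  by rewrite -trmx_mul !mulmxA -(mulmxA Y A X) -(mulmxA Y (A *m X) A) AXA YAs YAY.
by rewrite -XAY_X XAY_Y.
Qed.

Lemma mulmx_tr_eq0 n (w : 'rV[R]_n) : (w *m w^T) 0 0 = 0 -> w = 0.
Proof.
rewrite mxE => /eqP; rewrite psumr_eq0 => [/allP w0|i _]; last first.
  by rewrite mxE -expr2 sqr_ge0.
apply/rowP => i; rewrite mxE; have := w0 i (mem_index_enum _).
by rewrite mxE -expr2 sqrf_eq0 => /eqP.
Qed.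

Lemma gram_unitmx r n (G : 'M[R]_(r, n)) : row_free G -> G *m G^T \in unitmx.
Proof.
move=> fG; rewrite -row_free_unit -kermx_eq0; apply/eqP/row_matrixP => i.
rewrite row0; set v := row i _.
have vGG : v *m (G *m G^T) = 0 by rewrite /v -row_mul mulmx_ker row0.
have : v *m G = 0.
  apply: mulmx_tr_eq0; rewrite trmx_mul mulmxA -(mulmxA v) vGG.
  by rewrite mul0mx mxE.
by move/eqP; rewrite mulmx_free_eq0 // => /eqP.
Qed.

(* Full-rank factorization [A = F G] gives the pseudoinverse
   [G^T (G G^T)^-1 (F^T F)^-1 F^T]. *)
Lemma penrose_exists m n (A : 'M[R]_(m, n)) : exists X, penrose A X.
Proof.
have [r [F [G [eA fG fFT]]]] : exists r (F : 'M[R]_(m, r)) (G : 'M[R]_(r, n)),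
    [/\ A = F *m G, row_free G & row_free F^T].
  exists (\rank A), (col_base A), (row_base A); split.
  - by rewrite mulmx_base.
  - exact: row_base_free.
  - by rewrite /row_free mxrank_tr; exact: col_base_full.
have uG := gram_unitmx fG.
have uF := gram_unitmx fFT; rewrite trmxK in uF.
set iG := invmx (G *m G^T); set iF := invmx (F^T *m F).
have GiG : G *m G^T *m iG = 1%:M by rewrite mulmxV.
have iFF : iF *m (F^T *m F) = 1%:M by rewrite mulVmx.
have iGs : iG^T = iG by rewrite trmx_inv trmx_mul trmxK.
have iFs : iF^T = iF by rewrite trmx_inv trmx_mul trmxK.
exists (G^T *m iG *m iF *m F^T).
have AX : A *m (G^T *m iG *m iF *m F^T) = F *m iF *m F^T.
  by rewrite eA !mulmxA -(mulmxA F G) -(mulmxA F _ iG) GiG mulmx1.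
have XA : G^T *m iG *m iF *m F^T *m A = G^T *m iG *m G.
  rewrite eA !mulmxA -(mulmxA (G^T *m iG *m iF) F^T F).
  by rewrite -(mulmxA (G^T *m iG) iF) iFF mulmx1.
split.
- rewrite AX eA !mulmxA -(mulmxA (F *m iF) F^T F).
  by rewrite -(mulmxA F iF) iFF mulmx1.
- rewrite XA !mulmxA -(mulmxA (G^T *m iG) G G^T).
  by rewrite -(mulmxA (G^T *m iG) (G *m G^T) iG) GiG mulmx1.
- by rewrite AX !trmx_mul trmxK iFs mulmxA.
- by rewrite XA !trmx_mul trmxK iGs mulmxA.
Qed.

Lemma mp_pinvP m n (A : 'M[R]_(m, n)) : penrose A (mp_pinv A).
Proof. by apply: xgetPex; exact: penrose_exists. Qed.

Lemma penrose_trmx n (A X : 'M[R]_n) : A^T = A -> penrose A X -> X^T = X.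
Proof.
move=> sA pX; apply: (penrose_unique _ pX); case: pX => AXA XAX AXs XAs.
have AXT : A *m X^T = X *m A by rewrite -{1}sA -trmx_mul XAs.
have XTA : X^T *m A = A *m X by rewrite -{1}sA -trmx_mul AXs.
split; last 2 first.
- by rewrite AXT XAs.
- by rewrite XTA AXs.
- have -> : A *m X^T *m A = (A *m X *m A)^T by rewrite !trmx_mul sA mulmxA.
  by rewrite AXA sA.
- have -> : X^T *m A *m X^T = (X *m A *m X)^T by rewrite !trmx_mul sA mulmxA.
  by rewrite XAX.
Qed.

End MoorePenrose.

Section SchurComplement.
Variables (R : realType) (n k : nat) (C : 'M[R]_n) (U : 'M[R]_(n, k)) (X : 'M[R]_k).
Hypotheses (sC : C^T = C) (pX : penrose (U^T *m C *m U) X).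

Let sX : X^T = X.
Proof. by apply: penrose_trmx pX; rewrite !trmx_mul trmxK sC mulmxA. Qed.

Let XSXr p (Y : 'M[R]_(k, p)) : X *m (U^T *m (C *m (U *m (X *m Y)))) = X *m Y.
Proof. by case: pX => _ + _ _; rewrite !mulmxA => ->. Qed.

Let SXSr p (Y : 'M[R]_(k, p)) :
  U^T *m (C *m (U *m (X *m (U^T *m (C *m (U *m Y)))))) = U^T *m (C *m (U *m Y)).
Proof. by case: pX => + _ _ _; rewrite !mulmxA => ->. Qed.

Lemma qform_corr v :
  qform (C *m U *m X *m U^T *m C) v = qform C (v *m C *m U *m X *m U^T).
Proof. by rewrite /qform !trmx_mul trmxK sC sX -!mulmxA XSXr. Qed.

Lemma qform_corr_range z :
  qform (C *m U *m X *m U^T *m C) (z *m U^T) = qform C (z *m U^T).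
Proof. by rewrite /qform !trmx_mul trmxK -!mulmxA SXSr. Qed.

Lemma qform_schur v :
  qform (C - C *m U *m X *m U^T *m C) v = qform C (v - v *m C *m U *m X *m U^T).
Proof.
rewrite /qform mulmxBr mulmxBl [in RHS]linearB /= !mulmxBl !mulmxBr.
by rewrite !trmx_mul !trmxK sC sX -!mulmxA XSXr subrr subr0.
Qed.

Lemma psd_schur : psd C -> psd (C - C *m U *m X *m U^T *m C).
Proof.
case=> _ qC; split=> [|v]; last by rewrite qform_schur.
by rewrite linearB /= !trmx_mul sC sX trmxK !mulmxA.
Qed.

End SchurComplement.

Section Selection.
Variables (R : realType) (n k : nat) (s : 'I_k -> 'I_n).

Lemma delta_mul_sel_mxT j : (delta_mx 0 j : 'rV[R]_k) *m (sel_mx R s)^T = delta_mx 0 (s j).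
Proof. by rewrite -rowE; apply/rowP => i; rewrite !mxE eqxx /= eq_sym. Qed.

Let big_sel (F : 'I_n -> R) : injective s ->
  \sum_(i in s @: [set: 'I_k]) F i = \sum_j F (s j).
Proof.
move=> s_inj; rewrite big_imset => [|? ? _ _ /s_inj //].
by apply: eq_bigl => j; rewrite inE.
Qed.

Lemma sel_diag_le_tr_corr (C : 'M[R]_n) (X : 'M[R]_k) : psd C -> injective s ->
  penrose ((sel_mx R s)^T *m C *m sel_mx R s) X ->
  \sum_j C (s j) (s j) <= \tr (C *m sel_mx R s *m X *m (sel_mx R s)^T *m C).
Proof.
move=> pC s_inj pX; have sC := proj1 pC.
rewrite mxtrace_qform (bigID (mem (s @: [set: 'I_k]))) /= big_sel //.
rewrite -[X in X <= _]addr0; apply: lerD.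
  apply: ler_sum => j _.
  by rewrite -delta_mul_sel_mxT qform_corr_range // delta_mul_sel_mxT qform_delta.
by apply: sumr_ge0 => i _; rewrite qform_corr //; apply: (proj2 pC).
Qed.

Lemma topk_diag_sum (C : 'M[R]_n) : selects_topk C s -> (k <= n)%N ->
  k%:R * \tr C <= n%:R * \sum_j C (s j) (s j).
Proof.
case=> s_inj topk kn; set T := \sum_j C (s j) (s j).
set I := s @: [set: 'I_k].
have notI i : i \notin I -> forall j, s j != i.
  by move=> iI j; apply: contraNneq iI => <-; rewrite imset_f.
have trC : \tr C = T + \sum_(i | i \notin I) C i i.
  by rewrite /mxtrace (bigID (mem I)) /= big_sel.
have cardI : #|I| = k by rewrite card_imset // cardsT card_ord.
have rest_le : k%:R * \sum_(i | i \notin I) C i i <= (n - k)%:R * T.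
  have diag_le i : i \notin I -> k%:R * C i i <= T.
    move=> iI; rewrite -[k in k%:R](card_ord k) -sumr_const mulr_suml.
    by apply: ler_sum => j _; rewrite mul1r; apply: topk; exact: notI.
  rewrite mulr_sumr (le_trans (ler_sum _ diag_le)) // sumr_const -[T *+ _]mulr_natl.
  rewrite -cardI -[n in (n - _)%N](card_ord n) -(cardC I) addKn.
  by rewrite (eq_card (B := [predC I])) // => i; rewrite !inE.
rewrite natrB // in rest_le; rewrite trC; nra.
Qed.

End Selection.

Section SRk.
Variables (R : realType) (n k : nat).

Lemma SRk_subE (G A : 'M[R]_n) (U : 'M[R]_(n, k)) :
  SRk G A U - A =
  (G - A) - (G - A) *m U *m mp_pinv (U^T *m (G - A) *m U) *m U^T *m (G - A).
Proof.
rewrite /SRk; case: ifP => [/eqP GUAU|_]; last by rewrite addrAC.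
by rewrite mulmxBl GUAU subrr !mul0mx subr0.
Qed.

Lemma SRk_topk (G A : 'M[R]_n) (s : 'I_k -> 'I_n) :
  psd (G - A) -> selects_topk (G - A) s -> (0 < n)%N -> (k <= n)%N ->
  psd (SRk G A (sel_mx R s) - A) /\
  \tr (SRk G A (sel_mx R s) - A) <= (1 - k%:R / n%:R) * \tr (G - A).
Proof.
move=> pC topk n0 kn; rewrite SRk_subE.
set C := G - A in pC topk *; set U := sel_mx R s.
have sC := proj1 pC; have pX := mp_pinvP (U^T *m C *m U).
split; first exact: psd_schur.
have corr_ge := sel_diag_le_tr_corr pC (proj1 topk) pX.
have diag_ge := topk_diag_sum topk kn.
have trC := psd_tr pC; have n_gt0 : 0 < n%:R :> R by rewrite ltr0n.
have : k%:R / n%:R * \tr C <= \sum_j C (s j) (s j).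
  by rewrite mulrAC ler_pdivrMr //; lra.
rewrite [\tr (C - _)]raddfB /= mulrBl mul1r; lra.
Qed.

End SRk.

Section SelfConcordance.
Variables (R : realType) (n : nat) (H : 'rV[R]_n -> 'M[R]_n) (M : R).
Hypothesis ssc : strongly_self_concordant H M.

Lemma ssc_loewner_le x y z :
  loewner_le (H y) ((1 + M * anorm (H z) (y - x)) *: H x).
Proof.
have := ssc x y z x; rewrite /loewner_le scalerDl scale1r opprB => ssc_xy.
by rewrite [H x + _]addrC -addrA.
Qed.

Lemma ssc_scale_ge0 x y : 0 < \tr (H x) -> 0 <= M * anorm (H x) (y - x).
Proof.
move=> trH; have r_sym : anorm (H x) (x - y) = anorm (H x) (y - x).
  by rewrite -opprB anormN.
have := psd_tr (psdD (ssc x y x x) (ssc y x x x)).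
rewrite r_sym; set t := M * _; rewrite !raddfD /= !raddfN /= !mxtraceZ => sum_ge0.
by rewrite -(pmulr_lge0 _ trH); lra.
Qed.

End SelfConcordance.

Lemma sr_ratio_bound (R : realFieldType) (kap t q a h p : R) :
  0 <= kap -> 0 <= t -> 0 < h -> 0 < p -> h <= a -> h <= (1 + t) * p ->
  q <= kap * ((1 + t / 2) ^+ 2 * a - p) ->
  q / p <= kap * (1 + t / 2) ^+ 4 * ((a - h) / h + 2 * t).
Proof.
move=> kap0 t0 h0 p0 ha hp hq; set c := 1 + t / 2.
have [hn0 pn0] : h != 0 /\ p != 0 by rewrite !gt_eqF.
have hc : h <= c ^+ 2 * p.
  have : 0 <= t ^+ 2 / 4 * p by rewrite mulr_ge0 ?divr_ge0 ?sqr_ge0 ?ltW.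
  rewrite /c; nra.
have step_p : c ^+ 2 * a / p <= c ^+ 4 * (a / h).
  rewrite -subr_ge0.
  have -> : c ^+ 4 * (a / h) - c ^+ 2 * a / p = c ^+ 2 * a * (c ^+ 2 * p - h) / (h * p).
    by field; rewrite hn0 pn0.
  apply: divr_ge0; last by rewrite mulr_ge0 ?ltW.
  have c0 : 0 <= c by rewrite /c; lra.
  by rewrite !mulr_ge0 ?subr_ge0 //; lra.
have c4 : c ^+ 4 * (1 - 2 * t) <= 1.
  have : 0 <= t ^+ 5 by rewrite exprn_ge0.
  have : 0 <= t ^+ 4 by rewrite exprn_ge0.
  have : 0 <= t ^+ 3 by rewrite exprn_ge0.
  rewrite /c; nra.
have -> : (a - h) / h = a / h - 1 by field.
apply: (@le_trans _ _ (kap * (c ^+ 2 * a / p - 1))).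
  rewrite ler_pdivrMr //.
  by have -> : kap * (c ^+ 2 * a / p - 1) * p = kap * (c ^+ 2 * a - p) by field.
rewrite -[kap * _ * _]mulrA; apply: ler_wpM2l => //; lra.
Qed.

Theorem mainTheorem3 (R : realType) (d k : nat)
  (f : 'rV[R]_d -> R) (H : 'rV[R]_d -> 'M[R]_d) (mu L M : R)
  (x xp : 'rV[R]_d) (B : 'M[R]_d) (s : 'I_k -> 'I_d) :
  hessian_of f H ->
  0 < mu ->
  (forall y, loewner_le (mu%:M) (H y) /\ loewner_le (H y) (L%:M)) ->
  strongly_self_concordant H M ->
  (1 <= k)%N -> (k < d)%N ->
  B^T = B -> loewner_le (H x) B ->
  let r := anorm (H x) (xp - x) in
  let P := (1 + M * r / 2) ^+ 2 *: B in
  selects_topk (P - H xp) s ->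
  let Bp := SRk P (H xp) (sel_mx R s) in
  loewner_le (H xp) Bp /\
  \tr (Bp - H xp) / \tr (H xp) <=
    (1 - k%:R / d%:R) * (1 + M * r / 2) ^+ 4 *
      (\tr (B - H x) / \tr (H x) + 2 * M * r).
Proof.
move=> _ mu0 mu_le ssc _ kd _ HxB r P topk Bp.
have d0 : (0 < d)%N by lia.
have [pHx trHx] := psd_tr_gt0_of_scalar_le d0 mu0 (proj1 (mu_le x)).
have [_ trHp] := psd_tr_gt0_of_scalar_le d0 mu0 (proj1 (mu_le xp)).
have t0 : 0 <= M * r := ssc_scale_ge0 ssc xp trHx.
have Hp_le : loewner_le (H xp) ((1 + M * r) *: H x) := ssc_loewner_le ssc x xp x.
have Hx_le : loewner_le (H x) ((1 + M * r) *: H xp).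
  by have := ssc_loewner_le ssc xp x x; rewrite -opprB anormN.
have P_ge : loewner_le (H xp) P.
  apply: (loewner_le_trans Hp_le); apply: loewner_le_trans (loewner_leZ _ HxB).
    by apply: loewner_le_scale => //; nra.
  exact: sqr_ge0.
have [gap_psd gap_tr] := SRk_topk P_ge topk d0 (ltnW kd).
split=> //; rewrite [\tr (B - _)]raddfB -[2 * M * r]mulrA.
apply: sr_ratio_bound => //.
- by rewrite subr_ge0 ler_pdivrMr ?ltr0n // mul1r ler_nat ltnW.
- by rewrite -subr_ge0 -raddfB; exact: psd_tr.
- by rewrite -mxtraceZ; exact: loewner_le_tr.
- by move: gap_tr; rewrite [\tr (P - _)]raddfB /= mxtraceZ.
Qed.
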